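(* Let $c,d>0$ with $\frac1c+\frac1d\ge 1$. For $r\in(0,1)$ and $p>0$ define $$\omega(c,d,p,r)=\left(\frac{r^p}{1+r^p}\,F\!\left(c,d;c+d;\frac{r^p}{1+r^p}\right)\right)^{1/p}.$$ Then for each fixed $r\in(0,1)$, $p\mapsto\omega(c,d,p,r)$ is increasing on $(0,\infty)$. In particular, for all $r\in(0,1)$, $$\frac{\sqrt r}{1+\sqrt r}\,F\!\left(c,d;c+d;\frac{\sqrt r}{1+\sqrt r}\right)\le\left(\frac{r}{1+r}\,F\!\left(c,d;c+d;\frac{r}{1+r}\right)\right)^{1/2}.$$
   Context: $F(a,b;c;x)={}_2F_1(a,b;c;x)=\sum_{n\ge0}\frac{(a)_n(b)_n}{(c)_n}\frac{x^n}{n!}$ for $|x|<1$ is the Gaussian hypergeometric function, where $(a)_0=1$, $(a)_n=a(a+1)\cdots(a+n-1)$. *)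

From Stdlib Require Import Reals Lra ClassicalEpsilon Factorial.
Open Scope R_scope.

Fixpoint poch (a : R) (n : nat) : R :=
  match n with
  | O => 1
  | S k => poch a k * (a + INR k)
  end.

Definition hyp_term (a b c x : R) (n : nat) : R :=
  poch a n * poch b n / poch c n * x ^ n / INR (fact n).

(* F(a,b;c;x) = sum_{n>=0} hyp_term a b c x n, defined as the sum of the
   series (chosen by Hilbert's epsilon; it is the genuine sum whenever the
   series converges, e.g. for |x| < 1 and c not a non-positive integer). *)
Definition hyp2F1 (a b c x : R) : R :=
  epsilon (inhabits 0) (fun l => infinite_sum (hyp_term a b c x) l).

Definition omega (c d p r : R) : R :=
  let t := Rpower r p / (1 + Rpower r p) in
  Rpower (t * hyp2F1 c d (c + d) t) (1 / p).

(* Write F(t) = F(c,d;c+d;t) = sum_n a_n t^n and H(t) = (1 - t) F(t).  The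
   hypothesis 1/c + 1/d >= 1 means c d <= c + d, and since
     a_(n+1) - a_n = a_n (c d - c - d - n) / ((c + d + n) (n + 1)),
   the coefficients a_n are nonincreasing, strictly from a_1 to a_2.  Hence
   H(t) = 1 + sum_(n>=1) (a_n - a_(n-1)) t^n has nonpositive coefficients
   after the constant one: on [0,1) the function H is nonincreasing, and
   0 < H(t) < 1 for 0 < t < 1 (positivity comes from F >= 1).

   Since r^p = t_p / (1 - t_p), we get omega(c,d,p,r) = r H(t_p)^(1/p).  When
   p grows, t_p decreases, so H(t_p) is a number of (0,1) that does not
   decrease, while its exponent 1/p decreases: omega increases strictly.  The
   square-root inequality is the comparison of p = 1/2 with p = 1. *)

From Stdlib Require Import Reals Lra ClassicalEpsilon Factorial.
Open Scope R_scope.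

Lemma poch_pos (a : R) (n : nat) : 0 < a -> 0 < poch a n.
Proof.
  intros ha; induction n as [|n IH]; simpl; [lra|].
  pose proof (pos_INR n); apply Rmult_lt_0_compat; lra.
Qed.

Lemma cv_const (k : R) : Un_cv (fun _ => k) k.
Proof.
  intros eps heps; exists O; intros n _.
  unfold R_dist; rewrite Rminus_diag, Rabs_R0; exact heps.
Qed.

Lemma hyp2F1_sum (a b c x l : R) :
  infinite_sum (hyp_term a b c x) l -> hyp2F1 a b c x = l.
Proof.
  intros hl; unfold hyp2F1.
  apply (uniqueness_sum (hyp_term a b c x)); [|exact hl].
  exact (epsilon_spec (inhabits 0) (fun l => infinite_sum (hyp_term a b c x) l)
           (ex_intro _ l hl)).
Qed.

Section ZeroBalancedSeries.

Variables c d : R.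
Hypothesis hc : 0 < c.
Hypothesis hd : 0 < d.

Definition coef (n : nat) : R :=
  poch c n * poch d n / poch (c + d) n / INR (fact n).

Lemma coef_0 : coef 0 = 1.
Proof. unfold coef; simpl; field. Qed.

Lemma coef_pos (n : nat) : 0 < coef n.
Proof.
  unfold coef.
  pose proof (poch_pos c n hc); pose proof (poch_pos d n hd).
  pose proof (poch_pos (c + d) n ltac:(lra)); pose proof (INR_fact_lt_0 n).
  apply Rdiv_lt_0_compat; [apply Rdiv_lt_0_compat|]; try apply Rmult_lt_0_compat; lra.
Qed.

Lemma coef_succ_diff (n : nat) :
  coef (S n) - coef n =
  coef n * (c * d - c - d - INR n) / ((c + d + INR n) * (INR n + 1)).
Proof.
  unfold coef; simpl poch; rewrite fact_simpl, mult_INR, S_INR.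
  pose proof (poch_pos (c + d) n ltac:(lra)); pose proof (INR_fact_lt_0 n).
  pose proof (pos_INR n).
  field; repeat split; lra.
Qed.

Hypothesis hcd : c * d <= c + d.

Lemma coef_succ_le (n : nat) : coef (S n) <= coef n.
Proof.
  enough (coef (S n) - coef n <= 0) by lra.
  rewrite coef_succ_diff; pose proof (coef_pos n); pose proof (pos_INR n).
  assert (0 < / ((c + d + INR n) * (INR n + 1)))
    by (apply Rinv_0_lt_compat, Rmult_lt_0_compat; lra).
  assert (coef n * (c * d - c - d - INR n) <= 0) by nra.
  unfold Rdiv; nra.
Qed.

(* ... and strictly decrease from a_1 to a_2 (this makes H < 1). *)
Lemma coef_2_lt_1 : coef 2 < coef 1.
Proof.
  enough (coef 2 - coef 1 < 0) by lra.
  rewrite coef_succ_diff; pose proof (coef_pos 1); simpl INR.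
  assert (0 < / ((c + d + 1) * (1 + 1)))
    by (apply Rinv_0_lt_compat, Rmult_lt_0_compat; lra).
  assert (coef 1 * (c * d - c - d - 1) < 0) by nra.
  unfold Rdiv; nra.
Qed.

Lemma coef_le_1 (n : nat) : coef n <= 1.
Proof.
  induction n as [|n IH]; [rewrite coef_0; lra|].
  pose proof (coef_succ_le n); lra.
Qed.

Definition psum (t : R) (N : nat) : R := sum_f_R0 (fun n => coef n * t ^ n) N.

(* Coefficients b_n of H(t) = (1 - t) F(t), and partial sums P_N(t). *)
Definition dcoef (n : nat) : R :=
  match n with O => 1 | S m => coef (S m) - coef m end.

Definition dsum (t : R) (N : nat) : R := sum_f_R0 (fun n => dcoef n * t ^ n) N.

Lemma psum_telescope (t : R) (N : nat) :
  (1 - t) * psum t N = dsum t N - coef N * t ^ S N.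
Proof.
  unfold psum, dsum; induction N as [|N IH].
  - simpl; rewrite coef_0; ring.
  - rewrite !tech5, Rmult_plus_distr_l, IH; simpl; ring.
Qed.

Lemma psum_growing (t : R) : 0 <= t -> Un_growing (psum t).
Proof.
  intros ht n; unfold psum; rewrite tech5.
  pose proof (coef_pos (S n)); pose proof (pow_le t (S n) ht); nra.
Qed.

(* All b_n with n >= 1 are nonpositive. *)
Lemma dsum_decreasing (t : R) : 0 <= t -> Un_decreasing (dsum t).
Proof.
  intros ht n; unfold dsum; rewrite tech5; simpl dcoef.
  pose proof (coef_succ_le n); pose proof (pow_le t (S n) ht); nra.
Qed.

Lemma dsum_le_1 (t : R) (N : nat) : 0 <= t -> dsum t N <= 1.
Proof.
  intros ht; apply Rle_trans with (dsum t 0).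
  - apply decreasing_prop; [apply dsum_decreasing; exact ht | apply Nat.le_0_l].
  - unfold dsum; simpl; lra.
Qed.

Lemma dsum_2_lt_1 (t : R) : 0 < t -> dsum t 2 < 1.
Proof.
  intros ht; unfold dsum; simpl.
  pose proof (coef_succ_le 0); pose proof coef_2_lt_1.
  assert ((coef 1 - coef 0) * t <= 0) by nra.
  assert ((coef 2 - coef 1) * (t * t) < 0) by (apply Rmult_neg_pos; nra).
  nra.
Qed.

Lemma dsum_antitone (t1 t2 : R) (N : nat) :
  0 <= t1 <= t2 -> dsum t2 N <= dsum t1 N.
Proof.
  intros ht; unfold dsum; induction N as [|N IH]; [simpl; lra|].
  rewrite !tech5; simpl dcoef.
  pose proof (coef_succ_le N).
  assert (t1 ^ S N <= t2 ^ S N) by (apply pow_incr; lra).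
  nra.
Qed.

Lemma tail_cv (t : R) : 0 <= t < 1 -> Un_cv (fun N => coef N * t ^ S N) 0.
Proof.
  intros ht eps heps.
  destruct (pow_lt_1_zero t ltac:(rewrite Rabs_right; lra) eps heps) as [N HN].
  exists N; intros n hn; unfold R_dist; rewrite Rminus_0_r.
  specialize (HN (S n) ltac:(auto)).
  pose proof (coef_pos n); pose proof (coef_le_1 n); pose proof (pow_le t (S n) (proj1 ht)).
  rewrite Rabs_right in * by nra; nra.
Qed.

(* For 0 <= t < 1 the series of F converges: S_N is nondecreasing and bounded
   by 1 / (1 - t), since (1 - t) S_N <= P_N <= 1. *)
Lemma psum_cv (t : R) : 0 <= t < 1 -> Un_cv (psum t) (hyp2F1 c d (c + d) t).
Proof.
  intros ht.
  assert (bounded : has_ub (psum t)).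
  { exists (/ (1 - t)); intros x [N ->].
    pose proof (psum_telescope t N); pose proof (dsum_le_1 t N (proj1 ht)).
    pose proof (coef_pos N); pose proof (pow_le t (S N) (proj1 ht)).
    apply (Rmult_le_reg_l (1 - t)); [lra|]; rewrite Rinv_r by lra; nra. }
  destruct (growing_cv _ (psum_growing t (proj1 ht)) bounded) as [l hl].
  enough (hyp2F1 c d (c + d) t = l) as -> by exact hl.
  apply hyp2F1_sum; intros eps heps.
  destruct (hl eps heps) as [N HN]; exists N; intros n hn.
  replace (sum_f_R0 (hyp_term c d (c + d) t) n) with (psum t n); [auto|].
  apply sum_eq; intros i _; unfold hyp_term, coef.
  pose proof (poch_pos (c + d) i ltac:(lra)); pose proof (INR_fact_lt_0 i).
  field; lra.
Qed.

Lemma hyp2F1_ge_1 (t : R) : 0 <= t < 1 -> 1 <= hyp2F1 c d (c + d) t.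
Proof.
  intros ht.
  replace 1 with (psum t 0) by (unfold psum; simpl; rewrite coef_0; ring).
  exact (growing_ineq _ _ (psum_growing t (proj1 ht)) (psum_cv t ht) 0).
Qed.

Definition Hfun (t : R) : R := (1 - t) * hyp2F1 c d (c + d) t.

Lemma dsum_cv (t : R) : 0 <= t < 1 -> Un_cv (dsum t) (Hfun t).
Proof.
  intros ht.
  pose proof (CV_plus _ _ _ _ (CV_mult _ _ _ _ (cv_const (1 - t)) (psum_cv t ht))
                (tail_cv t ht)) as hcv.
  rewrite Rplus_0_r in hcv; intros eps heps.
  destruct (hcv eps heps) as [N HN]; exists N; intros n hn.
  specialize (HN n hn); rewrite psum_telescope in HN.
  replace (dsum t n) with (dsum t n - coef n * t ^ S n + coef n * t ^ S n) by ring.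
  exact HN.
Qed.

Lemma Hfun_pos (t : R) : 0 <= t < 1 -> 0 < Hfun t.
Proof.
  intros ht; unfold Hfun; pose proof (hyp2F1_ge_1 t ht); nra.
Qed.

Lemma Hfun_lt_1 (t : R) : 0 < t < 1 -> Hfun t < 1.
Proof.
  intros ht.
  pose proof (decreasing_ineq _ _ (dsum_decreasing t ltac:(lra))
                (dsum_cv t ltac:(lra)) 2).
  pose proof (dsum_2_lt_1 t (proj1 ht)); lra.
Qed.

Lemma Hfun_antitone (t1 t2 : R) : 0 <= t1 <= t2 -> t2 < 1 -> Hfun t2 <= Hfun t1.
Proof.
  intros ht ht2.
  apply Rle_cv_lim with (Un := dsum t2) (Vn := dsum t1).
  - intro N; apply dsum_antitone; exact ht.
  - apply dsum_cv; lra.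
  - apply dsum_cv; lra.
Qed.

End ZeroBalancedSeries.

Lemma inv_sum_ge_1 (c d : R) :
  0 < c -> 0 < d -> 1 / c + 1 / d >= 1 -> c * d <= c + d.
Proof.
  intros hc hd hcd.
  replace (c + d) with ((1 / c + 1 / d) * (c * d)) by (field; lra).
  assert (0 < c * d) by nra.
  nra.
Qed.

Definition tpar (r p : R) : R := Rpower r p / (1 + Rpower r p).

Lemma tpar_range (r p : R) : 0 < tpar r p < 1.
Proof.
  unfold tpar; pose proof (exp_pos (p * ln r)) as hpos; fold (Rpower r p) in hpos.
  split; [apply Rdiv_lt_0_compat; lra|].
  apply Rmult_lt_reg_r with (1 + Rpower r p); [lra|].
  unfold Rdiv; rewrite Rmult_assoc, Rinv_l; lra.
Qed.

Lemma tpar_antitone (r p q : R) : 0 < r < 1 -> p < q -> tpar r q <= tpar r p.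
Proof.
  intros hr hpq; unfold tpar, Rpower.
  assert (ln r < 0) by (rewrite <- ln_1; apply ln_increasing; lra).
  assert (exp (q * ln r) < exp (p * ln r)) by (apply exp_increasing; nra).
  pose proof (exp_pos (q * ln r)).
  set (x := exp (p * ln r)) in *; set (y := exp (q * ln r)) in *.
  apply Rmult_le_reg_r with ((1 + x) * (1 + y)); [nra|].
  replace (y / (1 + y) * ((1 + x) * (1 + y))) with (y * (1 + x)) by (field; lra).
  replace (x / (1 + x) * ((1 + x) * (1 + y))) with (x * (1 + y)) by (field; lra).
  nra.
Qed.

(* Since r^p = t_p / (1 - t_p), omega(c,d,p,r) = r H(t_p)^(1/p). *)
Lemma omega_repr (c d p r : R) :
  0 < c -> 0 < d -> c * d <= c + d -> 0 < r -> 0 < p ->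
  omega c d p r = r * Rpower (Hfun c d (tpar r p)) (1 / p).
Proof.
  intros hc hd hcd hr hp.
  pose proof (tpar_range r p) as ht.
  pose proof (Hfun_pos c d hc hd hcd (tpar r p) ltac:(lra)).
  pose proof (exp_pos (p * ln r)) as hpow; fold (Rpower r p) in hpow.
  unfold omega; cbv zeta; fold (tpar r p).
  replace (tpar r p * hyp2F1 c d (c + d) (tpar r p))
    with (Rpower r p * Hfun c d (tpar r p))
    by (unfold Hfun, tpar; field; lra).
  rewrite <- Rpower_mult_distr, Rpower_mult by assumption.
  replace (p * (1 / p)) with 1 by (field; lra).
  rewrite Rpower_1 by assumption; reflexivity.
Qed.

(* For 0 < x <= y < 1 and 0 < p < q, x^(1/p) < y^(1/q): the base does not
   decrease and the negative logarithm is divided by a larger number. *)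
Lemma Rpower_inv_exponent_lt (x y p q : R) :
  0 < x <= y -> y < 1 -> 0 < p < q -> Rpower x (1 / p) < Rpower y (1 / q).
Proof.
  intros hxy hy hpq; unfold Rpower; apply exp_increasing.
  assert (ln x <= ln y).
  { destruct (Req_dec x y) as [->|]; [lra|]; left; apply ln_increasing; lra. }
  assert (ln y < 0) by (rewrite <- ln_1; apply ln_increasing; lra).
  assert (1 / q < 1 / p) by (unfold Rdiv; rewrite !Rmult_1_l; apply Rinv_lt_contravar; nra).
  assert (0 < 1 / p) by (apply Rdiv_lt_0_compat; lra).
  nra.
Qed.

Lemma omega_increasing (c d : R) :
  0 < c -> 0 < d -> c * d <= c + d ->
  forall r, 0 < r < 1 -> forall p q, 0 < p -> p < q -> omega c d p r < omega c d q r.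
Proof.
  intros hc hd hcd r hr p q hp hpq.
  rewrite !omega_repr by lra.
  apply Rmult_lt_compat_l; [lra|].
  pose proof (tpar_range r p); pose proof (tpar_range r q).
  apply Rpower_inv_exponent_lt; [split| |lra].
  - apply Hfun_pos; lra.
  - pose proof (tpar_antitone r p q hr hpq).
    apply Hfun_antitone; lra.
  - apply Hfun_lt_1; assumption.
Qed.

Lemma omega_half (c d r : R) :
  0 < c -> 0 < d -> c * d <= c + d -> 0 < r ->
  omega c d (/ 2) r =
  (sqrt r / (1 + sqrt r) * hyp2F1 c d (c + d) (sqrt r / (1 + sqrt r))) ^ 2.
Proof.
  intros hc hd hcd hr.
  pose proof (tpar_range r (/ 2)) as ht; unfold tpar in ht.
  unfold omega; cbv zeta; rewrite Rpower_sqrt in * by assumption.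
  replace (1 / / 2) with (INR 2) by (simpl; field).
  apply Rpower_pow.
  pose proof (hyp2F1_ge_1 c d hc hd hcd (sqrt r / (1 + sqrt r)) ltac:(lra)); nra.
Qed.

Lemma omega_one (c d r : R) :
  0 < c -> 0 < d -> c * d <= c + d -> 0 < r ->
  omega c d 1 r = r / (1 + r) * hyp2F1 c d (c + d) (r / (1 + r)).
Proof.
  intros hc hd hcd hr.
  pose proof (tpar_range r 1) as ht; unfold tpar in ht.
  unfold omega; cbv zeta; rewrite Rpower_1 in * by assumption.
  replace (1 / 1) with 1 by field.
  apply Rpower_1.
  pose proof (hyp2F1_ge_1 c d hc hd hcd (r / (1 + r)) ltac:(lra)); nra.
Qed.

Theorem mainTheorem3 (c d : R) (hc : 0 < c) (hd : 0 < d)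
  (hcd : 1 / c + 1 / d >= 1) :
  (forall r : R, 0 < r < 1 ->
     forall p q : R, 0 < p -> p < q -> omega c d p r < omega c d q r)
  /\
  (forall r : R, 0 < r < 1 ->
     sqrt r / (1 + sqrt r) * hyp2F1 c d (c + d) (sqrt r / (1 + sqrt r))
     <= sqrt (r / (1 + r) * hyp2F1 c d (c + d) (r / (1 + r)))).
Proof.
  pose proof (inv_sum_ge_1 c d hc hd hcd) as hcd'.
  pose proof (omega_increasing c d hc hd hcd') as hmono.
  split; [exact hmono|].
  intros r hr.
  pose proof (tpar_range r (/ 2)) as ht; unfold tpar in ht; rewrite Rpower_sqrt in ht by lra.
  pose proof (hyp2F1_ge_1 c d hc hd hcd' (sqrt r / (1 + sqrt r)) ltac:(lra)).
  rewrite <- (sqrt_pow2 (sqrt r / (1 + sqrt r) * _)) by nra.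
  apply sqrt_le_1_alt.
  rewrite <- omega_half, <- omega_one by lra.
  left; apply hmono; lra.
Qed.
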